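(* Let $G$ and $H$ be finite simple graphs without isolated vertices, each of order at least three, and let $f=(V_0,V_1,V_2)$ be a $\gamma_{tR}(G\times H)$-function with $|V_2|$ as large as possible among all $\gamma_{tR}(G\times H)$-functions. The following are equivalent: (i) $G$ and $H$ are both triangle centered; (ii) $\gamma_{tR}(G\times H)=6$; (iii) $|V_1\cup V_2|=3$.
   Context: A total Roman dominating function on a graph $X$ without isolated vertices is a map $f:V(X)\to\{0,1,2\}$, written $f=(V_0,V_1,V_2)$ with $V_i=\{v:f(v)=i\}$, such that every vertex of $V_0$ has a neighbor in $V_2$ and the subgraph induced by $V_1\cup V_2$ has no isolated vertices; $\gamma_{tR}(X)$ is the minimum of $\sum_v f(v)$ over such $f$, and a $\gamma_{tR}(X)$-function is one attaining this minimum. $G$ is triangle centered if it contains a triangle $xyz$ such that every vertex of $G$ is adjacent to at least two vertices of $\{x,y,z\}$. The direct product $G\times H$ has vertex set $V(G)\times V(H)$, with $(g,h)(g',h')$ an edge iff $gg'\in E(G)$ and $hh'\in E(H)$. *)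

From mathcomp Require Import all_boot.
Set Implicit Arguments. Unset Strict Implicit. Unset Printing Implicit Defensive.

Definition simple_graph (V : finType) (e : rel V) : Prop :=
  symmetric e /\ irreflexive e.

Definition no_isolated (V : finType) (e : rel V) : Prop :=
  forall v, exists u, e v u.

Definition direct_prod (V W : finType) (e : rel V) (d : rel W) : rel (V * W) :=
  fun p q => e p.1 q.1 && d p.2 q.2.

Definition fval (V : finType) (f : {ffun V -> 'I_3}) (v : V) : nat := f v.

Definition is_TRDF (V : finType) (e : rel V) (f : {ffun V -> 'I_3}) : Prop :=
  (forall v, fval f v = 0 -> exists u, e v u /\ fval f u = 2) /\
  (forall v, 0 < fval f v -> exists u, e v u /\ 0 < fval f u).

Definition is_TRDFb (V : finType) (e : rel V) (f : {ffun V -> 'I_3}) : bool :=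
  [forall v, (fval f v == 0) ==> [exists u, e v u && (fval f u == 2)]] &&
  [forall v, (0 < fval f v) ==> [exists u, e v u && (0 < fval f u)]].

Definition weight (V : finType) (f : {ffun V -> 'I_3}) : nat :=
  \sum_(v : V) fval f v.

(* gamma_tR: minimum weight of a TRDF (the default 2*#|V| is attained by the
   constant-2 function when there are no isolated vertices). *)
Definition gamma_tR (V : finType) (e : rel V) : nat :=
  \big[minn/(2 * #|V|)]_(f : {ffun V -> 'I_3} | is_TRDFb e f) weight f.

Definition is_gamma_tR_function (V : finType) (e : rel V) (f : {ffun V -> 'I_3}) : Prop :=
  is_TRDF e f /\ weight f = gamma_tR e.

Definition Vi (V : finType) (f : {ffun V -> 'I_3}) (i : nat) : {set V} :=
  [set v | fval f v == i].

Definition triangle_centered (V : finType) (e : rel V) : Prop :=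
  exists x y z : V, [/\ e x y, e y z & e x z] /\
    forall v, 2 <= (e v x) + (e v y) + (e v z).

From mathcomp Require Import all_boot order zify.
Set Implicit Arguments. Unset Strict Implicit. Unset Printing Implicit Defensive.

(** Write [P = V1 ∪ V2] (here [supp f]) and [T = V2], so that the weight of [f] is
    [|P| + |T|].  A vertex sharing a coordinate with every vertex of [T] has no neighbour
    in [T], hence lies in [P].  This forces [|P| + |T| >= 7] when [|T| <= 1] or when [T] is
    two vertices of one row or column, so weight 6 leaves two shapes: [P = T] with [|T| = 3],
    or [T = {(g1,h1), (g2,h2)}] and [P = {g1,g2} × {h1,h2}].

    If every vertex of a row [{g} × V(H)] has a neighbour in [D], then [g] is adjacent to the
    first coordinates of two distinct vertices of [D]: a neighbour [t] of some [(g, h)], and a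
    neighbour of [(g, t.2)], which cannot be [t].  Applied to a total dominating set of size 3
    this makes its first coordinates a centred triangle.  In the grid case, applied to [T] and
    a row avoiding [P], it makes every [g] outside [{g1, g2}] adjacent to both, and [g1 g2] is
    an edge.  Conversely, centred triangles [xyz] in [G] and [x'y'z'] in [H] make
    [{(x,x'), (y,y'), (z,z')}] a total dominating set, i.e. a TRDF of weight 6 with
    [|V2| = 3]; maximality of [|V2|] then excludes the grid shape for [f].  The statements
    about [H] follow by swapping the factors. *)

Lemma exists_third (T : finType) (a b : T) : 3 <= #|T| -> exists c, c != a /\ c != b.
Proof.
move=> T3; have /subsetPn [c _] : ~~ ([set: T] \subset [set a; b]).
  apply: contraTN T3 => /subset_leq_card; rewrite cardsT cards2 -ltnNge ltnS.
  by move/leq_trans; apply; case: (a != b).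
by rewrite !inE negb_or => /andP[]; exists c.
Qed.

Section TotalRoman.
Variables (V : finType) (e : rel V).
Implicit Types (f : {ffun V -> 'I_3}) (D : {set V}).

Definition supp f : {set V} := [set v | 0 < fval f v].

Lemma fval_lt3 f v : fval f v < 3. Proof. exact: ltn_ord. Qed.

Lemma supp_Vi12 f : Vi f 1 :|: Vi f 2 = supp f.
Proof. by apply/setP => v; rewrite !inE; case: (fval f v) (fval_lt3 f v) => [|[|[|]]]. Qed.

Lemma Vi2_sub_supp f : Vi f 2 \subset supp f.
Proof. by rewrite -supp_Vi12 subsetUr. Qed.

Lemma weight_supp f : weight f = #|supp f| + #|Vi f 2|.
Proof.
rewrite /weight -!sum1_card !(big_mkcond (fun v => v \in _)) -big_split /=.
by apply: eq_bigr => v _; rewrite !inE; case: (fval f v) (fval_lt3 f v) => [|[|[|]]].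
Qed.

Lemma is_TRDFP f : reflect (is_TRDF e f) (is_TRDFb e f).
Proof.
apply: (iffP andP) => [[/forallP H0 /forallP H1]|[H0 H1]]; split.
- by move=> v /eqP/(implyP (H0 v))/existsP[u /andP[evu /eqP fu]]; exists u.
- by move=> v /(implyP (H1 v))/existsP[u /andP[evu fu]]; exists u.
- apply/forallP => v; apply/implyP => /eqP/H0[u [evu fu]].
  by apply/existsP; exists u; rewrite evu fu.
- apply/forallP => v; apply/implyP => /H1[u [evu fu]].
  by apply/existsP; exists u; rewrite evu fu.
Qed.

Lemma gamma_tR_le f : is_TRDF e f -> gamma_tR e <= weight f.
Proof.
move/is_TRDFP => Hf; rewrite /gamma_tR -Order.NatOrder.minEnat.
exact: (@Order.TotalTheory.bigmin_le_cond _ nat _ (2 * #|V|) f _ (@weight V) Hf).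
Qed.

Definition total_dom D : Prop := forall v, exists2 u, u \in D & e v u.

Lemma TRDF_supp_total_dom f : is_TRDF e f -> total_dom (supp f).
Proof.
move=> [H0 H1] v; have [fv0|fv_gt0] := posnP (fval f v).
  by have [u [evu fu]] := H0 v fv0; exists u; rewrite // inE fu.
by have [u [evu fu]] := H1 v fv_gt0; exists u; rewrite ?inE.
Qed.

Lemma undominated_in_supp f v :
  is_TRDF e f -> (forall u, u \in Vi f 2 -> ~~ e v u) -> v \in supp f.
Proof.
move=> [H0 _] undom; rewrite inE lt0n; apply/eqP => /H0 [u [evu fu]].
by move: evu; apply/negP/undom; rewrite inE fu.
Qed.

Definition indicator2 D : {ffun V -> 'I_3} :=
  [ffun v => if v \in D then ord_max else ord0].

Lemma Vi2_indicator2 D : Vi (indicator2 D) 2 = D.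
Proof. by apply/setP => v; rewrite inE /fval ffunE; case: (v \in D). Qed.

Lemma supp_indicator2 D : supp (indicator2 D) = D.
Proof. by apply/setP => v; rewrite inE /fval ffunE; case: (v \in D). Qed.

Lemma TRDF_indicator2 D : total_dom D -> is_TRDF e (indicator2 D).
Proof.
move=> domD; split=> v _; have [u uD evu] := domD v; exists u.
  by rewrite /fval ffunE uD.
by rewrite -(supp_indicator2 D) inE in uD.
Qed.

Lemma triangle_centered_of_count a b c :
  irreflexive e -> (forall v, 2 <= e v a + e v b + e v c) -> triangle_centered e.
Proof.
move=> irr count; exists a, b, c; split=> //.
have := count a; have := count b; rewrite !irr.
by case: (e a b); case: (e a c); case: (e b c); case: (e b a).
Qed.

Lemma triangle_centered_of_edge a b : simple_graph e -> 3 <= #|V| -> e a b ->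
  (forall v, v != a -> v != b -> e v a && e v b) -> triangle_centered e.
Proof.
move=> [sym irr] V3 eab common; have [c [ca cb]] := exists_third a b V3.
have /andP[eca ecb] := common c ca cb.
apply: (@triangle_centered_of_count a b c irr) => v.
have [->|va] := eqVneq v a; first by rewrite irr eab (sym a c) eca.
have [->|vb] := eqVneq v b; first by rewrite irr (sym b a) eab (sym b c) ecb.
by have /andP[-> ->] := common v va vb.
Qed.

End TotalRoman.

Lemma pigeon3 (a1 a2 a3 b1 b2 b3 : bool) :
  2 <= a1 + a2 + a3 -> 2 <= b1 + b2 + b3 -> [|| a1 && b1, a2 && b2 | a3 && b3].
Proof. by case: a1; case: a2; case: a3; case: b1; case: b2; case: b3. Qed.

Lemma cards3 (T : finType) (x y z : T) :
  x != y -> y != z -> z != x -> #|[set x; y; z]| = 3.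
Proof.
by move=> xy yz zx; rewrite setUC cardsU1 cards2 !inE negb_or xy zx eq_sym yz.
Qed.

Definition row {V W : finType} (a : V) : {set V * W} := setX [set a] [set: W].
Definition col {V W : finType} (b : W) : {set V * W} := setX [set: V] [set b].

Section DirectProduct.
Variables (V W : finType) (e : rel V) (d : rel W).
Hypotheses (simple_e : simple_graph e) (simple_d : simple_graph d).
Local Notation adj := (direct_prod e d).

Lemma adj_neq1 p q : adj p q -> p.1 != q.1.
Proof. by case/andP=> epq _; apply: contraTneq epq => ->; rewrite simple_e.2. Qed.

Lemma adj_neq2 p q : adj p q -> p.2 != q.2.
Proof. by case/andP=> _ dpq; apply: contraTneq dpq => ->; rewrite simple_d.2. Qed.

Lemma mem_row (a g : V) (h : W) : ((g, h) \in row a) = (g == a).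
Proof. by rewrite in_setX !inE andbT. Qed.

Lemma mem_col (b : W) (g : V) (h : W) : ((g, h) \in col b) = (h == b).
Proof. by rewrite in_setX !inE. Qed.

Lemma card_row (a : V) : #|(row a : {set V * W})| = #|W|.
Proof. by rewrite cardsX cards1 cardsT mul1n. Qed.

Lemma card_col (b : W) : #|(col b : {set V * W})| = #|V|.
Proof. by rewrite cardsX cards1 cardsT muln1. Qed.

Lemma row_dominated_two (D : {set V * W}) g (h0 : W) :
  (forall h, exists2 t, t \in D & adj (g, h) t) ->
  exists t t', [/\ t \in D, t' \in D, t != t', e g t.1 & e g t'.1].
Proof.
move=> dom; have [t tD /andP[egt _]] := dom h0.
have [t' t'D adjt'] := dom t.2; exists t, t'; split=> //; last by case/andP: adjt'.
by apply: contraNneq (adj_neq2 adjt') => ->.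
Qed.

Lemma triangle_centered_of_total_dom (D : {set V * W}) :
  total_dom adj D -> #|D| = 3 -> triangle_centered e.
Proof.
move=> dom D3.
have /card_gt2P [x [y [z [[xD yD zD] [xy yz zx]]]]] : 2 < #|D| by rewrite D3.
have DE : D = [set x; y; z].
  apply/eqP; rewrite eq_sym eqEcard D3 cards3 // andbT.
  by apply/subsetP => u; rewrite !inE -orbA => /or3P[]/eqP->.
apply: (@triangle_centered_of_count _ _ x.1 y.1 z.1 simple_e.2) => g.
have [t [t' [+ + + + +]]] := row_dominated_two x.2 (fun h => dom (g, h)).
rewrite DE !inE -!orbA => /or3P[]/eqP-> /or3P[]/eqP->; rewrite ?eqxx //= => _ -> ->; lia.
Qed.

Lemma total_dom_of_triangle_centered :
  triangle_centered e -> triangle_centered d -> exists2 D, total_dom adj D & #|D| = 3.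
Proof.
move=> [x [y [z [[exy eyz exz] tcV]]]] [x' [y' [z' [_ tcW]]]].
exists [set (x, x'); (y, y'); (z, z')].
  move=> [g h]; have := pigeon3 (tcV g) (tcW h).
  case/or3P=> adj; [exists (x, x') | exists (y, y') | exists (z, z')] => //;
    by rewrite !inE eqxx ?orbT.
have nxy : x != y by apply: contraTneq exy => ->; rewrite simple_e.2.
have nyz : y != z by apply: contraTneq eyz => ->; rewrite simple_e.2.
have nxz : x != z by apply: contraTneq exz => ->; rewrite simple_e.2.
by rewrite cards3 // xpair_eqE negb_and ?nxy ?nyz // eq_sym nxz.
Qed.

Lemma TRDF_weight6_of_triangle_centered :
  triangle_centered e -> triangle_centered d ->
  exists g, [/\ is_TRDF adj g, weight g = 6 & #|Vi g 2| = 3].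
Proof.
move=> tce tcd; have [D domD D3] := total_dom_of_triangle_centered tce tcd.
exists (indicator2 D); rewrite weight_supp supp_indicator2 Vi2_indicator2 D3.
by split=> //; apply: TRDF_indicator2.
Qed.

Section TRDF.
Variable f : {ffun V * W -> 'I_3}.
Hypothesis TRDF_f : is_TRDF adj f.

Lemma aligned_in_supp p :
  (forall u, u \in Vi f 2 -> (p.1 == u.1) || (p.2 == u.2)) -> p \in supp f.
Proof.
move=> aligned; apply: undominated_in_supp TRDF_f _ => u /aligned.
by apply: contraL => adj_pu; rewrite negb_or (adj_neq1 adj_pu) (adj_neq2 adj_pu).
Qed.

Lemma row_sub_supp a : Vi f 2 \subset row a -> row a \subset supp f.
Proof.
move=> /subsetP T_row; apply/subsetP => -[g h]; rewrite mem_row => /eqP->.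
by apply: aligned_in_supp => -[g' h'] /T_row; rewrite mem_row eq_sym => ->.
Qed.

Lemma col_sub_supp b : Vi f 2 \subset col b -> col b \subset supp f.
Proof.
move=> /subsetP T_col; apply/subsetP => -[g h]; rewrite mem_col => /eqP->.
by apply: aligned_in_supp => -[g' h'] /T_col; rewrite mem_col eq_sym => ->; rewrite orbT.
Qed.

Lemma card_supp_row a : 0 < #|W| -> Vi f 2 \subset row a -> #|W| + 2 <= #|supp f|.
Proof.
move=> /card_gt0P[h0 _] T_row.
have [n n_supp adj_n] := TRDF_supp_total_dom TRDF_f (a, h0).
have [m m_supp adj_m] := TRDF_supp_total_dom TRDF_f (a, n.2).
have nm : n != m by apply: contraNneq (adj_neq2 adj_m) => ->.
have off_row u h : u \in supp f -> adj (a, h) u -> u \in supp f :\: row a.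
  by case: u => g' h' u_supp /adj_neq1 /= ag; rewrite in_setD u_supp mem_row eq_sym ag.
rewrite -(cardsID (row a)) (setIidPr (row_sub_supp T_row)) card_row leq_add2l.
have <- : #|[set n; m]| = 2 by rewrite cards2 nm.
by apply/subset_leq_card/subsetP => u /set2P[]->; [apply: off_row adj_n | apply: off_row adj_m].
Qed.

Lemma card_supp_cross a b : Vi f 2 \subset [set (a, b)] -> #|V| + #|W| <= #|supp f|.
Proof.
move=> T_ab; have V_gt0 : 0 < #|V| by apply/card_gt0P; exists a.
have T_row : Vi f 2 \subset row a.
  by apply: (subset_trans T_ab); rewrite sub1set mem_row.
have T_col : Vi f 2 \subset col b.
  by apply: (subset_trans T_ab); rewrite sub1set mem_col.
have card_cross : #|row a :|: col b| = #|W| + #|V| - 1.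
  suff E : row a :&: col b = [set (a, b)] by rewrite cardsU E card_row card_col cards1.
  by apply/setP => -[g h]; rewrite in_setI mem_row mem_col !inE xpair_eqE.
have [[g h] n_supp adj_n] := TRDF_supp_total_dom TRDF_f (a, b).
have n_cross : (g, h) \notin row a :|: col b.
  have /= ag := adj_neq1 adj_n; have /= bh := adj_neq2 adj_n.
  by rewrite in_setU mem_row mem_col negb_or !(eq_sym _ a) !(eq_sym _ b) ag bh.
have : (g, h) |: (row a :|: col b) \subset supp f.
  by rewrite subUset sub1set n_supp subUset row_sub_supp ?col_sub_supp.
move/subset_leq_card; rewrite cardsU1 n_cross card_cross /=; lia.
Qed.

Lemma weight_gt6_of_V2_le1 : 3 <= #|V| -> 3 <= #|W| -> #|Vi f 2| <= 1 -> 6 < weight f.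
Proof.
move=> V3 W3; rewrite weight_supp leq_eqVlt ltnS leqn0 => /orP[/cards1P[[a b] T_ab] | /eqP T0].
  have T_sub : Vi f 2 \subset [set (a, b)] by rewrite T_ab.
  have := card_supp_cross T_sub; rewrite T_ab cards1; lia.
have -> : supp f = setT.
  apply/setP => p; rewrite in_setT; apply: aligned_in_supp => u.
  by rewrite (cards0_eq T0) inE.
rewrite T0 cardsT card_prod; have := leq_mul V3 W3; lia.
Qed.

Lemma grid_sub_supp g1 h1 g2 h2 : Vi f 2 = [set (g1, h1); (g2, h2)] ->
  setX [set g1; g2] [set h1; h2] \subset supp f.
Proof.
move=> T12; apply/subsetP => -[g h]; rewrite in_setX !in_set2.
case/andP=> /orP[]/eqP-> /orP[]/eqP->;
  try by apply: (subsetP (Vi2_sub_supp f)); rewrite T12 !inE eqxx ?orbT.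
all: by apply: aligned_in_supp => u; rewrite T12 => /set2P[]->; rewrite /= eqxx ?orbT.
Qed.

Lemma triangle_centered_of_supp_grid g1 h1 g2 h2 : 3 <= #|V| -> g1 != g2 ->
  Vi f 2 = [set (g1, h1); (g2, h2)] -> supp f = setX [set g1; g2] [set h1; h2] ->
  triangle_centered e.
Proof.
move=> V3 g12 T12 supp_grid.
have e12 : e g1 g2.
  have [[g h]] := TRDF_supp_total_dom TRDF_f (g1, h1).
  rewrite supp_grid in_setX in_set2 => /andP[/orP[]/eqP-> _] /andP[//= e1 _].
  by rewrite simple_e.2 in e1.
apply: (triangle_centered_of_edge simple_e V3 e12) => g gg1 gg2.
have dom h : exists2 t, t \in Vi f 2 & adj (g, h) t.
  have: (g, h) \notin supp f by rewrite supp_grid in_setX in_set2 (negbTE gg1) (negbTE gg2).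
  rewrite inE lt0n negbK => /eqP/(TRDF_f.1)[t [adj_t ft]].
  by exists t; rewrite ?inE ?ft.
have [t [t' [+ + + + +]]] := row_dominated_two h1 dom.
by rewrite T12 => /set2P[]-> /set2P[]->; rewrite ?eqxx //= => _ -> ->.
Qed.

End TRDF.

End DirectProduct.

Section Swap.
Variables (V W : finType).
Implicit Type f : {ffun V * W -> 'I_3}.

Definition swapf f : {ffun W * V -> 'I_3} := [ffun p => f (p.2, p.1)].

Lemma card_swap (A : {set V * W}) : #|[set p : W * V | (p.2, p.1) \in A]| = #|A|.
Proof.
have swK : cancel (fun p : V * W => (p.2, p.1)) (fun p => (p.2, p.1)) by case.
have swK' : cancel (fun p : W * V => (p.2, p.1)) (fun p => (p.2, p.1)) by case.
by rewrite -(card_imset A (can_inj swK)) (can2_imset_pre A swK swK').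
Qed.

Lemma mem_Vi_swapf f i p : (p \in Vi (swapf f) i) = ((p.2, p.1) \in Vi f i).
Proof. by rewrite !inE /fval ffunE. Qed.

Lemma card_Vi_swapf f i : #|Vi (swapf f) i| = #|Vi f i|.
Proof. by rewrite -card_swap; apply: eq_card => p; rewrite mem_Vi_swapf inE. Qed.

Lemma card_supp_swapf f : #|supp (swapf f)| = #|supp f|.
Proof. by rewrite -card_swap; apply: eq_card => -[h g]; rewrite !inE /fval ffunE. Qed.

Lemma weight_swapf f : weight (swapf f) = weight f.
Proof. by rewrite !weight_supp card_Vi_swapf card_supp_swapf. Qed.

Lemma TRDF_swapf (e : rel V) (d : rel W) f :
  is_TRDF (direct_prod e d) f -> is_TRDF (direct_prod d e) (swapf f).
Proof.
have fvalE p : fval (swapf f) p = fval f (p.2, p.1) by rewrite /fval ffunE.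
case=> H0 H1; split=> -[h g]; rewrite fvalE; [move/H0 | move/H1] => -[[g' h'] [adj fu]];
  by exists (h', g'); rewrite fvalE /direct_prod andbC.
Qed.

End Swap.

Section LowerBound.
Variables (V W : finType) (e : rel V) (d : rel W).
Hypotheses (simple_e : simple_graph e) (simple_d : simple_graph d).
Hypotheses (V3 : 3 <= #|V|) (W3 : 3 <= #|W|).
Implicit Type f : {ffun V * W -> 'I_3}.

Lemma card_supp_col f b : is_TRDF (direct_prod e d) f ->
  Vi f 2 \subset col b -> #|V| + 2 <= #|supp f|.
Proof.
move=> TRDF_f /subsetP T_col; rewrite -card_supp_swapf.
apply: (card_supp_row simple_d simple_e (TRDF_swapf TRDF_f) (a := b)); first lia.
apply/subsetP => -[h g]; rewrite mem_Vi_swapf => /T_col.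
by rewrite mem_col mem_row.
Qed.

Lemma card_supp_of_card_V2_2 f : is_TRDF (direct_prod e d) f -> #|Vi f 2| = 2 ->
  4 <= #|supp f| /\ (#|supp f| = 4 -> triangle_centered e).
Proof.
move=> TRDF_f /eqP/cards2P [[g1 h1] [[g2 h2] [_ T12]]].
have [supp5 | [g12 h12]] : 5 <= #|supp f| \/ g1 != g2 /\ h1 != h2.
- have [eq12|g12] := eqVneq g1 g2.
    have T_row : Vi f 2 \subset row g1 by rewrite T12 -eq12 subUset !sub1set !mem_row eqxx.
    by have := card_supp_row simple_e simple_d TRDF_f (ltnW (ltnW W3)) T_row; left; lia.
  have [eq12|h12] := eqVneq h1 h2; last by right.
  have T_col : Vi f 2 \subset col h1 by rewrite T12 -eq12 subUset !sub1set !mem_col eqxx.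
  by have := card_supp_col TRDF_f T_col; left; lia.
- by split=> [|supp4]; [apply: ltnW | move: supp5; rewrite supp4].
- have grid4 : #|setX [set g1; g2] [set h1; h2]| = 4 by rewrite cardsX !cards2 g12 h12.
  have grid_supp := grid_sub_supp simple_e simple_d TRDF_f T12.
  split=> [|supp4]; first by rewrite -grid4 subset_leq_card.
  apply: (triangle_centered_of_supp_grid simple_e simple_d TRDF_f V3 g12 T12).
  by apply/esym/eqP; rewrite eqEcard grid_supp grid4 supp4.
Qed.

Lemma weight_ge6 f : is_TRDF (direct_prod e d) f -> 6 <= weight f.
Proof.
move=> TRDF_f; have T_supp := subset_leq_card (Vi2_sub_supp f).
case: (ltngtP #|Vi f 2| 2) => [T_lt2 | T_gt2 | T2].
- exact/ltnW/(weight_gt6_of_V2_le1 simple_e simple_d TRDF_f V3 W3).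
- rewrite weight_supp; lia.
- have [supp4 _] := card_supp_of_card_V2_2 TRDF_f T2; rewrite weight_supp; lia.
Qed.

Lemma weight6_triangle_centered_l f : is_TRDF (direct_prod e d) f ->
  weight f = 6 -> triangle_centered e.
Proof.
move=> TRDF_f w6; have T_supp := subset_leq_card (Vi2_sub_supp f).
case: (ltngtP #|Vi f 2| 2) => [T_lt2 | T_gt2 | T2].
- by have := weight_gt6_of_V2_le1 simple_e simple_d TRDF_f V3 W3 T_lt2; rewrite w6.
- have supp3 : #|supp f| = 3 by move: w6; rewrite weight_supp; lia.
  apply: (triangle_centered_of_total_dom simple_e simple_d (TRDF_supp_total_dom TRDF_f)).
  exact: supp3.
- have [_] := card_supp_of_card_V2_2 TRDF_f T2; apply.
  move: w6; rewrite weight_supp T2; lia.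
Qed.

End LowerBound.

Lemma weight6_triangle_centered (V W : finType) (e : rel V) (d : rel W) f :
  simple_graph e -> simple_graph d -> 3 <= #|V| -> 3 <= #|W| ->
  is_TRDF (direct_prod e d) f -> weight f = 6 ->
  triangle_centered e /\ triangle_centered d.
Proof.
move=> se sd V3 W3 TRDF_f w6; split; first exact: weight6_triangle_centered_l TRDF_f w6.
by apply: (weight6_triangle_centered_l sd se W3 V3 (TRDF_swapf TRDF_f)); rewrite weight_swapf.
Qed.

Theorem theorem3p3 (V W : finType) (e : rel V) (d : rel W)
  (f : {ffun (V * W)%type -> 'I_3}) :
  simple_graph e -> simple_graph d ->
  no_isolated e -> no_isolated d ->
  3 <= #|V| -> 3 <= #|W| ->
  is_gamma_tR_function (direct_prod e d) f ->
  (forall g, is_gamma_tR_function (direct_prod e d) g ->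
     #|Vi g 2| <= #|Vi f 2|) ->
  [/\ (triangle_centered e /\ triangle_centered d) <->
        gamma_tR (direct_prod e d) = 6,
      gamma_tR (direct_prod e d) = 6 <-> #|Vi f 1 :|: Vi f 2| = 3 &
      (triangle_centered e /\ triangle_centered d) <->
        #|Vi f 1 :|: Vi f 2| = 3].
Proof.
move=> se sd _ _ V3 W3 [TRDF_f wf] f_max.
have f_ge6 := weight_ge6 se sd V3 W3 TRDF_f.
have T_supp := subset_leq_card (Vi2_sub_supp f).
rewrite supp_Vi12 -wf.
have tc_w6 : triangle_centered e /\ triangle_centered d ->
    weight f = 6 /\ 3 <= #|Vi f 2|.
  case=> tce tcd; have [g [TRDF_g wg g3]] := TRDF_weight6_of_triangle_centered se tce tcd.
  have w6 : weight f = 6 by have := gamma_tR_le TRDF_g; rewrite -wf wg; lia.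
  by split=> //; rewrite -g3; apply: f_max; split; rewrite // wg -wf.
have w6_tc : weight f = 6 -> triangle_centered e /\ triangle_centered d.
  exact: weight6_triangle_centered se sd V3 W3 TRDF_f.
have w6_supp3 : weight f = 6 -> #|supp f| = 3.
  by move=> w6; have [_ T3] := tc_w6 (w6_tc w6); move: w6; rewrite weight_supp; lia.
have supp3_w6 : #|supp f| = 3 -> weight f = 6.
  by move=> supp3; move: f_ge6; rewrite weight_supp; lia.
split; split.
- by case/tc_w6.
- exact: w6_tc.
- exact: w6_supp3.
- exact: supp3_w6.
- by case/tc_w6 => /w6_supp3.
- by move/supp3_w6/w6_tc.
Qed.
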